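(* Let $\otimes$ and $\oplus$ be uninorms on $[0,1]$. If $\otimes$ satisfies property $A$ and $\oplus$ satisfies property $B'$, then $(\otimes,\oplus)$ satisfies the dual rearrangement inequality.
   Context: A uninorm is a function $\otimes:[0,1]^2\to[0,1]$ that is commutative, associative, monotonic ($x\leq y$ implies $x\otimes z\leq y\otimes z$), and has an identity element $e\in[0,1]$. A function $f$ satisfies property $A$ if for all $0\leq x\leq y\leq z\leq w\leq 1$, $w+x\leq y+z$ implies $f(x,w)\leq f(y,z)$; property $B'$ if for all $0\leq x\leq y\leq1$ and $0\leq z\leq w\leq1$, $f(x,w)-f(x,z)\geq f(y,w)-f(y,z)$. The pair $(\otimes,\oplus)$ satisfies the dual rearrangement inequality if for every $n\geq1$, all $0\leq x_1\leq\cdots\leq x_n\leq 1$, $0\leq y_1\leq\cdots\leq y_n\leq 1$ and every permutation $\sigma$ of $\{1,\dots,n\}$, $$(x_n\oplus y_1)\otimes\cdots\otimes(x_1\oplus y_n)\geq (x_{\sigma(1)}\oplus y_1)\otimes\cdots\otimes(x_{\sigma(n)}\oplus y_n)\geq (x_1\oplus y_1)\otimes\cdots\otimes(x_n\oplus y_n).$$ *)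

From HB Require Import structures.
From mathcomp Require Import all_boot all_order all_algebra all_fingroup.
From mathcomp Require Import reals.
Set Implicit Arguments. Unset Strict Implicit. Unset Printing Implicit Defensive.
Import Order.TTheory GRing.Theory Num.Theory.
Local Open Scope ring_scope.

Definition unit01 {R : realType} (x : R) : Prop := 0 <= x /\ x <= 1.

(* A binary operation on [0,1], represented as f : R -> R -> R that maps
   [0,1]^2 into [0,1]; all axioms are required only on [0,1]. *)
Definition uninorm {R : realType} (f : R -> R -> R) (e : R) : Prop :=
  unit01 e /\ [/\
      (forall x y, unit01 x -> unit01 y -> unit01 (f x y)),
      (forall x y, unit01 x -> unit01 y -> f x y = f y x),
      (forall x y z, unit01 x -> unit01 y -> unit01 z ->
                      f x (f y z) = f (f x y) z),
      (forall x y z, unit01 x -> unit01 y -> unit01 z ->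
                      x <= y -> f x z <= f y z) &
      (forall x, unit01 x -> f x e = x)].

Definition is_uninorm {R : realType} (f : R -> R -> R) : Prop :=
  exists e : R, uninorm f e.

Definition property_A {R : realType} (f : R -> R -> R) : Prop :=
  forall x y z w : R, 0 <= x -> x <= y -> y <= z -> z <= w -> w <= 1 ->
    w + x <= y + z -> f x w <= f y z.

Definition property_B' {R : realType} (f : R -> R -> R) : Prop :=
  forall x y z w : R, 0 <= x -> x <= y -> y <= 1 -> 0 <= z -> z <= w -> w <= 1 ->
    f x w - f x z >= f y w - f y z.

(* The n-fold product a_1 (x) ... (x) a_n, bracketed as
   a_1 (x) (a_2 (x) ( ... (a_n (x) e))) where e is the identity of (x);
   by associativity and the identity law the bracketing is immaterial. *)
Definition uprod {R : realType} (f : R -> R -> R) (e : R) (n : nat)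
    (a : 'I_n -> R) : R :=
  \big[f/e]_(i < n) a i.

(* Dual rearrangement inequality for the pair (otimes, oplus), where eo is
   the identity element of otimes.  Indices 1..n of the paper are 'I_n. *)
Definition dual_rearrangement {R : realType} (otimes oplus : R -> R -> R)
    (eo : R) : Prop :=
  forall (n : nat), (0 < n)%N ->
  forall (x y : 'I_n -> R),
    (forall i, unit01 (x i)) -> (forall i, unit01 (y i)) ->
    (forall i j : 'I_n, (i <= j)%N -> x i <= x j) ->
    (forall i j : 'I_n, (i <= j)%N -> y i <= y j) ->
    forall s : 'S_n,
      uprod otimes eo (fun i => oplus (x (rev_ord i)) (y i))
        >= uprod otimes eo (fun i => oplus (x (s i)) (y i))
      /\ uprod otimes eo (fun i => oplus (x (s i)) (y i))
        >= uprod otimes eo (fun i => oplus (x i) (y i)).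

(* For a <= b and c <= d in [0,1], property B' of ⊕ gives
   (b ⊕ d) + (a ⊕ c) <= (b ⊕ c) + (a ⊕ d), and a ⊕ c and b ⊕ d are the least and
   the greatest of the four values; property A of ⊗ (after ordering the middle
   pair by commutativity) then yields (a ⊕ c) ⊗ (b ⊕ d) <= (b ⊕ c) ⊗ (a ⊕ d).
   So swapping an ascent of the permutation never decreases the product and
   swapping a descent never increases it.  Bubble sort, which terminates because
   swapping an ascent strictly lowers sum_k k * s(k), reaches the reversed
   permutation (resp. the identity), and this gives both inequalities. *)

From HB Require Import structures.
From mathcomp Require Import all_boot all_order all_algebra all_fingroup.
From mathcomp Require Import reals lra zify.

Set Implicit Arguments. Unset Strict Implicit. Unset Printing Implicit Defensive.
Import Order.TTheory.

Lemma sum_mul_tperm_lt n (h : 'I_n -> nat) (i j : 'I_n) :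
  i < j -> h i < h j ->
  \sum_(k < n) k * h (tperm i j k) < \sum_(k < n) k * h k.
Proof.
move=> lt_ij lt_hij.
have neq_ij : i != j by rewrite neq_ltn lt_ij.
have split_ij (G : 'I_n -> nat) :
    \sum_(k < n) G k = G i + G j + \sum_(k < n | (k != i) && (k != j)) G k.
  by rewrite (bigD1 i) // (bigD1 j) 1?eq_sym //= addnA.
rewrite !split_ij tpermL tpermR (eq_bigr (fun k : 'I_n => k * h k)).
  rewrite ltn_add2r; nia.
by move=> k /andP[ki kj]; rewrite tpermD // eq_sym.
Qed.

Lemma homo_ltn_ord_leq n (h : 'I_n -> 'I_n) :
  {homo h : i j / i < j} -> forall k : 'I_n, k <= h k.
Proof.
move=> h_incr k; have [m] := ubnP k; elim: m k => // m IHm [[|k] //= lt_kn] lt_km.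
have lt_k'n : k < n by exact: ltnW.
have le_kh := IHm (Ordinal lt_k'n) lt_km.
exact: leq_ltn_trans le_kh (h_incr (Ordinal lt_k'n) (Ordinal lt_kn) (ltnSn k)).
Qed.

Lemma perm_homo_ltn_eq1 n (s : 'S_n) : {homo s : i j / i < j} -> s = 1%g.
Proof.
move=> s_incr.
have s_mono : {mono s : i j / (i < j)%O} := leW_mono (le_mono s_incr).
have sV_incr : {homo s^-1%g : i j / i < j}.
  by move=> i j; have := can_mono (permKV s) s_mono i j; rewrite !ltEord => ->.
apply/permP => k; apply/val_inj/anti_leq.
rewrite perm1 (homo_ltn_ord_leq s_incr k) andbT -{2}(permK s k).
exact: homo_ltn_ord_leq.
Qed.

Definition rev_perm n : 'S_n := perm (@rev_ord_inj n).

Lemma rev_permE n : rev_perm n =1 @rev_ord n.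
Proof. exact: permE. Qed.

Lemma rev_permK n : (rev_perm n * rev_perm n = 1)%g.
Proof. by apply/permP => i; rewrite permM !rev_permE rev_ordK perm1. Qed.

Lemma perm_rev_ind n (P : 'S_n -> Prop) :
  P (rev_perm n) ->
  (forall (s : 'S_n) (i j : 'I_n), i < j -> s i < s j -> P (tperm i j * s)%g -> P s) ->
  forall s, P s.
Proof.
move=> P_rev P_swap s; have [m] := ubnP (\sum_(k < n) k * s k).
elim: m s => // m IHm s lt_sm.
case: (pickP [pred ij : 'I_n * 'I_n | (ij.1 < ij.2) && (s ij.1 < s ij.2)]).
  move=> [i j] /andP[/= lt_ij lt_sij]; apply: (P_swap s i j lt_ij lt_sij).
  apply: IHm; under eq_bigr do rewrite permM.
  apply: leq_trans (sum_mul_tperm_lt (h := fun k => nat_of_ord (s k)) lt_ij lt_sij) _.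
  by rewrite -ltnS.
move=> no_ascent; have s_rev1 : (s * rev_perm n = 1)%g.
  apply: perm_homo_ltn_eq1 => i j lt_ij; rewrite !permM !rev_permE /=.
  have lt_sji : s j < s i.
    have := no_ascent (i, j); rewrite /= lt_ij /= => /negbT.
    rewrite -leqNgt leq_eqVlt => /orP[/eqP/val_inj/perm_inj eq_ji|//].
    by move: lt_ij; rewrite eq_ji ltnn.
  have := ltn_ord (s i); lia.
by rewrite -[s]mulg1 -(rev_permK n) mulgA s_rev1 mul1g.
Qed.

Lemma perm_id_ind n (P : 'S_n -> Prop) :
  P 1%g ->
  (forall (s : 'S_n) (i j : 'I_n), i < j -> s j < s i -> P (tperm i j * s)%g -> P s) ->
  forall s, P s.
Proof.
move=> P1 P_swap s; rewrite -[s]mulg1 -(rev_permK n) mulgA.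
elim/perm_rev_ind: (s * rev_perm n)%g => [|t i j lt_ij lt_tij IH].
  by rewrite rev_permK.
apply: (P_swap _ i j lt_ij); last by rewrite mulgA.
rewrite !permM !rev_permE /=; have := ltn_ord (t j); lia.
Qed.

Import GRing.Theory Num.Theory.
Local Open Scope ring_scope.

Section UninormTheory.
Variables (R : realType) (f : R -> R -> R) (e : R).
Hypothesis f_uni : uninorm f e.

Lemma uninorm_unit01_id : unit01 e.
Proof. by case: f_uni. Qed.

Local Hint Resolve uninorm_unit01_id : core.

Lemma uninorm_closed x y : unit01 x -> unit01 y -> unit01 (f x y).
Proof. by case: f_uni => _ [f_closed _ _ _ _]; apply: f_closed. Qed.

Lemma uninorm_comm x y : unit01 x -> unit01 y -> f x y = f y x.
Proof. by case: f_uni => _ [_ f_comm _ _ _]; apply: f_comm. Qed.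

Lemma uninorm_assoc x y z : unit01 x -> unit01 y -> unit01 z ->
  f x (f y z) = f (f x y) z.
Proof. by case: f_uni => _ [_ _ f_assoc _ _]; apply: f_assoc. Qed.

Lemma uninorm_monol x y z : unit01 x -> unit01 y -> unit01 z ->
  x <= y -> f x z <= f y z.
Proof. by case: f_uni => _ [_ _ _ f_mono _]; apply: f_mono. Qed.

Lemma uninorm_monor x y z : unit01 x -> unit01 y -> unit01 z ->
  y <= z -> f x y <= f x z.
Proof.
by move=> x01 y01 z01 le_yz; rewrite !(uninorm_comm x01) //; apply: uninorm_monol.
Qed.

Lemma uninorm_idr x : unit01 x -> f x e = x.
Proof. by case: f_uni => _ [_ _ _ _ f_id]; apply: f_id. Qed.

Lemma uninorm_big_unit01 I (r : seq I) (P : pred I) (a : I -> R) :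
  (forall k, P k -> unit01 (a k)) -> unit01 (\big[f/e]_(k <- r | P k) a k).
Proof. by move=> a01; apply: big_ind => //; apply: uninorm_closed. Qed.

(* The uninorm is a monoid only on [0,1], so the bigop lemmas are applied on
   this subtype. *)
Definition unit_interval := {x : R | 0 <= x <= 1}.

Definition in01 x (x01 : unit01 x) : unit_interval := exist _ x (introT andP x01).

Lemma unit01_sval (u : unit_interval) : unit01 (sval u).
Proof. exact: elimT andP (valP u). Qed.

Local Hint Resolve unit01_sval : core.

Definition mul01 (u v : unit_interval) : unit_interval :=
  in01 (uninorm_closed (unit01_sval u) (unit01_sval v)).

Definition id01 : unit_interval := in01 uninorm_unit01_id.

Lemma mul01A : associative mul01.
Proof. by move=> u v w; apply: val_inj; rewrite /= uninorm_assoc. Qed.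

Lemma mul01C : commutative mul01.
Proof. by move=> u v; apply: val_inj; rewrite /= uninorm_comm. Qed.

Lemma mul1_01 : left_id id01 mul01.
Proof. by move=> u; apply: val_inj; rewrite /= uninorm_comm ?uninorm_idr. Qed.

HB.instance Definition _ :=
  Monoid.isComLaw.Build unit_interval id01 mul01 mul01A mul01C mul1_01.

Lemma uninorm_bigD2 n (a : 'I_n -> R) (i j : 'I_n) :
  (forall k, unit01 (a k)) -> i != j ->
  \big[f/e]_(k < n) a k =
    f (f (a i) (a j)) (\big[f/e]_(k < n | (k != i) && (k != j)) a k).
Proof.
move=> a01 neq_ij; pose A k := in01 (a01 k).
have val_big (P : pred 'I_n) :
    val (\big[mul01/id01]_(k < n | P k) A k) = \big[f/e]_(k < n | P k) a k.
  exact: (big_morph val (fun _ _ => erefl) erefl).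
by rewrite -!val_big (bigD1 i) // (bigD1 j) 1?eq_sym // Monoid.mulmA.
Qed.

End UninormTheory.

Section DualRearrangement.
Variables (R : realType) (otimes oplus : R -> R -> R) (et es : R).
Hypotheses (t_uni : uninorm otimes et) (s_uni : uninorm oplus es).
Hypotheses (t_A : property_A otimes) (s_B' : property_B' oplus).

Lemma two_term_rearrangement a b c d :
  unit01 a -> unit01 b -> unit01 c -> unit01 d -> a <= b -> c <= d ->
  otimes (oplus a c) (oplus b d) <= otimes (oplus b c) (oplus a d).
Proof.
move=> a01 b01 c01 d01 le_ab le_cd.
have [ac01 bd01] := (uninorm_closed s_uni a01 c01, uninorm_closed s_uni b01 d01).
have [bc01 ad01] := (uninorm_closed s_uni b01 c01, uninorm_closed s_uni a01 d01).
have le_ac_bc : oplus a c <= oplus b c by apply: (uninorm_monol s_uni).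
have le_bc_bd : oplus b c <= oplus b d by apply: (uninorm_monor s_uni).
have le_ac_ad : oplus a c <= oplus a d by apply: (uninorm_monor s_uni).
have le_ad_bd : oplus a d <= oplus b d by apply: (uninorm_monol s_uni).
have le_sum : oplus b d + oplus a c <= oplus b c + oplus a d.
  by have := s_B' a01.1 le_ab b01.2 c01.1 le_cd d01.2; lra.
have [le_bc_ad|lt_ad_bc] := leP (oplus b c) (oplus a d).
  exact: t_A ac01.1 le_ac_bc le_bc_ad le_ad_bd bd01.2 le_sum.
rewrite [leRHS](uninorm_comm t_uni) //.
apply: (t_A ac01.1 le_ac_ad (ltW lt_ad_bc) le_bc_bd bd01.2).
by rewrite [leRHS]addrC.
Qed.

Variables (n : nat) (x y : 'I_n -> R).
Hypotheses (x01 : forall i, unit01 (x i)) (y01 : forall i, unit01 (y i)).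
Hypotheses (x_incr : {homo x : i j / (i <= j)%N >-> i <= j})
           (y_incr : {homo y : i j / (i <= j)%N >-> i <= j}).

Definition rearr (s : 'S_n) : R := \big[otimes/et]_(i < n) oplus (x (s i)) (y i).

Lemma rearr_tperm_le (s : 'S_n) (i j : 'I_n) : (i < j)%N -> x (s i) <= x (s j) ->
  rearr s <= rearr (tperm i j * s)%g.
Proof.
move=> lt_ij le_xs; have neq_ij : i != j by rewrite neq_ltn lt_ij.
have oplus01 k l : unit01 (oplus (x k) (y l)) by apply: (uninorm_closed s_uni).
rewrite /rearr !(uninorm_bigD2 t_uni (fun k => oplus01 _ k) neq_ij) !permM tpermL tpermR.
have -> : \big[otimes/et]_(k < n | (k != i) && (k != j)) oplus (x ((tperm i j * s)%g k)) (y k)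
    = \big[otimes/et]_(k < n | (k != i) && (k != j)) oplus (x (s k)) (y k).
  by apply: eq_bigr => k /andP[ki kj]; rewrite permM tpermD // eq_sym.
apply: (uninorm_monol t_uni).
- by apply: (uninorm_closed t_uni).
- by apply: (uninorm_closed t_uni).
- by apply: (uninorm_big_unit01 t_uni).
- by apply: two_term_rearrangement => //; apply: y_incr; apply: ltnW.
Qed.

Lemma rearr_le_rev (s : 'S_n) : rearr s <= rearr (rev_perm n).
Proof.
elim/perm_rev_ind: s => // s i j lt_ij lt_sij IH.
apply: le_trans IH; apply: rearr_tperm_le lt_ij _.
by apply: x_incr; apply: ltnW.
Qed.

Lemma rearr_ge_id (s : 'S_n) : rearr 1%g <= rearr s.
Proof.
elim/perm_id_ind: s => // s i j lt_ij lt_sji IH.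
apply: le_trans IH _; rewrite -[X in _ <= rearr X]mul1g -(tperm2 i j) -mulgA.
apply: rearr_tperm_le lt_ij _; rewrite !permM tpermL tpermR.
by apply: x_incr; apply: ltnW.
Qed.

End DualRearrangement.

Theorem theorem7 (R : realType) (otimes oplus : R -> R -> R) (et es : R) :
  uninorm otimes et -> uninorm oplus es ->
  property_A otimes -> property_B' oplus ->
  dual_rearrangement otimes oplus et.
Proof.
move=> t_uni s_uni t_A s_B' n _ x y x01 y01 x_incr y_incr s.
have uprodE (p : 'S_n) (q : 'I_n -> 'I_n) : p =1 q ->
    uprod otimes et (fun i => oplus (x (q i)) (y i)) = rearr otimes oplus et x y p.
  by move=> pq; apply: eq_bigr => i _; rewrite pq.
rewrite (uprodE _ _ (@rev_permE n)) (uprodE s s) // (uprodE 1%g id (@perm1 _)).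
split; [exact: (rearr_le_rev t_uni s_uni t_A s_B' x01 y01 x_incr y_incr)
      | exact: (rearr_ge_id t_uni s_uni t_A s_B' x01 y01 x_incr y_incr)].
Qed.
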